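(* For integers $m\ge1$ and $1\le i\le m$, let $F_{m,i}(n,k)$ be the number of partitions $\lambda$ of $n$ with $X_{m,i}(\lambda)=k$. Then, as formal power series in $q,u$, $$\sum_{n,k\ge0}F_{m,i}(n,k)q^nu^k=\prod_{a\ge0}\left(\prod_{b=1}^{i-1}\frac{1}{1-u^aq^{am+b}}\prod_{b=i}^{m}\frac{1}{1-u^{a+1}q^{am+b}}\right).$$
   Context: For a partition $\lambda:\ n=\lambda_1+\dots+\lambda_k$ with $\lambda_1\ge\dots\ge\lambda_k\ge1$, $X_{m,i}(\lambda)=\sum_{j\equiv i\pmod m}\lambda_j$, the sum of the parts whose index is congruent to $i$ modulo $m$. *)

From mathcomp Require Import all_boot.
Set Implicit Arguments. Unset Strict Implicit. Unset Printing Implicit Defensive.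

Definition is_partition (n : nat) (l : seq nat) : bool :=
  [&& sorted geq l, all (fun x => 0 < x) l & sumn l == n].

(* X_{m,i}(lambda): sum of parts lambda_j (1-indexed j) with j = i mod m. *)
Definition Xmi (m i : nat) (l : seq nat) : nat :=
  \sum_(0 <= j < size l | j.+1 == i %[mod m]) nth 0 l j.

(* Formal power series in two variables q, u with nat coefficients:
   f n k is the coefficient of q^n u^k. *)
Definition fps2 := nat -> nat -> nat.

Definition fps2_one : fps2 := fun n k => ((n == 0) && (k == 0) : nat).

Definition fps2_mul (f g : fps2) : fps2 := fun n k =>
  \sum_(0 <= a < n.+1) \sum_(0 <= b < k.+1) f a b * g (n - a) (k - b).

(* 1 / (1 - u^c q^d) = sum_{j>=0} u^(c j) q^(d j), for d >= 1. *)
Definition fps2_geom (c d : nat) : fps2 := fun n k =>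
  ((d %| n) && (k == c * (n %/ d)) : nat).

Definition fps2_geom_prod (s : seq (nat * nat)) : fps2 :=
  foldr (fun cd acc => fps2_mul (fps2_geom cd.1 cd.2) acc) fps2_one s.

(* The factors indexed by a: prod_{b=1}^{i-1} 1/(1-u^a q^(am+b)) *
   prod_{b=i}^{m} 1/(1-u^(a+1) q^(am+b)). *)
Definition factors_a (m i a : nat) : seq (nat * nat) :=
  [seq (a, a * m + b) | b <- iota 1 (i - 1)] ++
  [seq (a.+1, a * m + b) | b <- iota i (m - i + 1)].

Definition partial_prod (m i N : nat) : fps2 :=
  fps2_geom_prod (flatten [seq factors_a m i a | a <- iota 0 N]).

From mathcomp Require Import all_boot zify.

Set Implicit Arguments.
Unset Strict Implicit.
Unset Printing Implicit Defensive.

(* Truncated at a < N, the product is prod_(1 <= t <= N m) 1/(1 - u^(c_t) q^t),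
   where c_t is the number of indices j <= t with j = i (mod m).  A monomial of
   such a product is an exponent vector (e_t); reading e_t as the number of
   columns of height t of a Young diagram gives the partition with parts
   lambda_j = sum_(t >= j) e_t, of size sum_t t e_t and with
   X_(m,i)(lambda) = sum_t c_t e_t.  This is a bijection onto the partitions with
   at most N m parts, which are all partitions of n as soon as n <= N m. *)

Fixpoint dotn (ws e : seq nat) : nat :=
  match ws, e with
  | w :: ws', x :: e' => w * x + dotn ws' e'
  | _, _ => 0
  end.

Definition geom_support (c d n k : nat) : seq (nat * nat) :=
  [seq p <- [seq (a, b) | a <- iota 0 n.+1, b <- iota 0 k.+1]
     | (d %| p.1) && (p.2 == c * (p.1 %/ d))].

Fixpoint exponent_vectors (fs : seq (nat * nat)) (n k : nat) : seq (seq nat) :=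
  if fs is cd :: fs' then
    [seq p.1 %/ cd.2 :: e | p <- geom_support cd.1 cd.2 n k,
                           e <- exponent_vectors fs' (n - p.1) (k - p.2)]
  else if (n == 0) && (k == 0) then [:: [::]] else [::].

Lemma mem_geom_support c d n k p :
  (p \in geom_support c d n k) = [&& p.1 <= n, p.2 <= k, d %| p.1 & p.2 == c * (p.1 %/ d)].
Proof.
case: p => a b; rewrite mem_filter /=.
have -> : ((a, b) \in [seq (x, y) | x <- iota 0 n.+1, y <- iota 0 k.+1]) =
          (a <= n) && (b <= k).
  apply/allpairsPdep/andP => [[x [y [+ + [-> ->]]]]|[le_an le_bk]].
    by rewrite !mem_iota.
  by exists a, b; rewrite !mem_iota.
by rewrite andbC -!andbA.
Qed.

Lemma geom_support_inj c d n k :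
  {in geom_support c d n k &, injective (fun p => p.1 %/ d)}.
Proof.
move=> [a b] [a' b']; rewrite !mem_geom_support /=.
case/and4P=> _ _ /divnK aE /eqP-> /and4P[_ _ /divnK a'E /eqP->] eq_div.
by rewrite -aE -a'E eq_div.
Qed.

Lemma uniq_geom_support c d n k : uniq (geom_support c d n k).
Proof.
rewrite filter_uniq // allpairs_uniq ?iota_uniq //.
by move=> [a b] [a' b'] _ _ [-> ->].
Qed.

Lemma size_exponent_vectors fs n k :
  size (exponent_vectors fs n k) = fps2_geom_prod fs n k.
Proof.
elim: fs n k => [|[c d] fs IH] n k /=; first by rewrite /fps2_one; case: (_ && _).
rewrite size_allpairs_dep sumnE big_map big_filter big_mkcond big_allpairs_dep.
apply: eq_bigr => a _; apply: eq_bigr => b _ /=.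
by rewrite IH /fps2_geom; case: (_ && _); rewrite ?mul1n ?mul0n.
Qed.

Lemma uniq_exponent_vectors fs n k : uniq (exponent_vectors fs n k).
Proof.
elim: fs n k => [|[c d] fs IH] n k /=; first by case: (_ && _).
apply: allpairs_uniq_dep => [|p _|]; [exact: uniq_geom_support | exact: IH |].
move=> [p e] [p' e'] /allpairsPdep[x [y [x_in _ [-> ->]]]].
move=> /allpairsPdep[x' [y' [x'_in _ Ex']]]; case: Ex' => -> ->.
by move=> /= [/(geom_support_inj x_in x'_in)-> ->].
Qed.

Lemma mem_exponent_vectors fs n k e : all (fun cd => 0 < cd.2) fs ->
  (e \in exponent_vectors fs n k) =
  [&& size e == size fs, dotn (unzip2 fs) e == n & dotn (unzip1 fs) e == k].
Proof.
elim: fs n k e => [|[c d] fs IH] n k e /=.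
  by case: e => [|x e]; case: n => [|n]; case: k.
case/andP=> d_gt0 fs_pos; apply/allpairsPdep/idP => [[p [e' [+ + ->]]]|].
  rewrite mem_geom_support IH // => /and4P[le_n le_k /divnK p1E /eqP p2E].
  case/and3P=> /eqP size_e' /eqP n_eq /eqP k_eq /=.
  by rewrite size_e' [d * _]mulnC p1E -p2E n_eq k_eq !subnKC ?eqxx.
case: e => [|x e] //= /and3P[size_e /eqP n_eq /eqP k_eq].
exists (d * x, c * x), e; rewrite mem_geom_support IH //= mulKn // dvdn_mulr //.
by rewrite eqxx -eqSS size_e; split=> //; apply/and3P; split; apply/eqP; lia.
Qed.

Fixpoint suffix_sums (e : seq nat) : seq nat :=
  if e is x :: e' then (x + head 0 (suffix_sums e')) :: suffix_sums e' else [::].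

Fixpoint adjacent_diffs (l : seq nat) : seq nat :=
  if l is a :: l' then (a - head 0 l') :: adjacent_diffs l' else [::].

Lemma size_suffix_sums e : size (suffix_sums e) = size e.
Proof. by elim: e => //= x e ->. Qed.

Lemma size_adjacent_diffs l : size (adjacent_diffs l) = size l.
Proof. by elim: l => //= a l ->. Qed.

Lemma head_suffix_sums e : head 0 (suffix_sums e) = sumn e.
Proof. by elim: e => //= x e ->. Qed.

Lemma sorted_suffix_sums e : sorted geq (suffix_sums e).
Proof. by elim: e => //= x e; case: (suffix_sums e) => //= y s ->; rewrite leq_addl. Qed.

Lemma suffix_sumsK : cancel suffix_sums adjacent_diffs.
Proof. by elim=> //= x e ->; rewrite addnK. Qed.

Lemma adjacent_diffsK l : sorted geq l -> suffix_sums (adjacent_diffs l) = l.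
Proof.
elim: l => //= a l IH sorted_al; rewrite IH ?(path_sorted sorted_al) //.
by case: l sorted_al {IH} => [|b l /andP[le_ba _]] /=; rewrite ?subn0 ?addn0 ?subnK.
Qed.

Definition sum_at (P : pred nat) (l : seq nat) : nat :=
  \sum_(0 <= j < size l | P j) nth 0 l j.

Lemma sum_at_nil P : sum_at P [::] = 0.
Proof. by rewrite /sum_at big_geq. Qed.

Lemma sum_at_cons P a l : sum_at P (a :: l) = P 0 * a + sum_at (fun j => P j.+1) l.
Proof.
rewrite /sum_at /= big_ltn_cond // big_add1 /=.
by case: (P 0); rewrite ?mul1n ?mul0n ?add0n.
Qed.

Lemma sum_at_true l : sum_at (fun=> true) l = sumn l.
Proof.
elim: l => [|a l IH]; first by rewrite sum_at_nil.
by rewrite sum_at_cons IH mul1n.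
Qed.

Lemma sum_at_cat_nseq0 P l z : sum_at P (l ++ nseq z 0) = sum_at P l.
Proof.
elim: l P => [|a l IH] P; last by rewrite /= !sum_at_cons IH.
by elim: z P => [|z IHz] P; rewrite ?sum_at_nil //= sum_at_cons IHz muln0 sum_at_nil.
Qed.

Lemma dotn_addl a (f : nat -> nat) (ts e : seq nat) : size e <= size ts ->
  dotn [seq a + f t | t <- ts] e = a * sumn e + dotn [seq f t | t <- ts] e.
Proof.
elim: ts e => [|t ts IH] [|x e] //= le_size; rewrite ?muln0 // IH // mulnDl mulnDr.
by rewrite addnACA.
Qed.

Lemma sum_at_suffix_sums P e :
  sum_at P (suffix_sums e) = dotn [seq count P (iota 0 t) | t <- iota 1 (size e)] e.
Proof.
elim: e P => [|x e IH] P /=; first by rewrite sum_at_nil.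
have count_iotaS t : count P (iota 0 t.+1) = P 0 + count (fun j => P j.+1) (iota 0 t).
  by rewrite /= -[1]/(1 + 0) iotaDl count_map.
have -> : [seq count P (iota 0 t) | t <- iota 2 (size e)] =
          [seq P 0 + count (fun j => P j.+1) (iota 0 t) | t <- iota 1 (size e)].
  by rewrite -[2]/(1 + 1) iotaDl -map_comp; apply: eq_map => t /=; rewrite -count_iotaS.
rewrite sum_at_cons IH head_suffix_sums dotn_addl ?size_iota //.
by case: (P 0); rewrite /= ?mul1n ?mul0n ?addn0 ?add0n // addnA.
Qed.

Lemma sumn_suffix_sums e : sumn (suffix_sums e) = dotn (iota 1 (size e)) e.
Proof.
rewrite -sum_at_true sum_at_suffix_sums; congr dotn.
by rewrite -[RHS]map_id; apply/eq_map => t; rewrite count_predT size_iota.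
Qed.

Lemma leq_size_sumn l : all (fun x => 0 < x) l -> size l <= sumn l.
Proof. by elim: l => //= a l IH /andP[a_gt0 /IH]; rewrite -add1n; apply: leq_add. Qed.

Lemma sorted_cat_nseq0 l z : sorted geq l -> sorted geq (l ++ nseq z 0).
Proof.
have path_nseq0 x y : path geq x (nseq y 0) by elim: y x => //= y IH x; rewrite IH.
case: l => [_|a l /= sorted_al]; last by rewrite cat_path sorted_al path_nseq0.
by case: z => //= z; apply: path_nseq0.
Qed.

Lemma sorted_geq_split_zeros l : sorted geq l ->
  l = [seq x <- l | 0 < x] ++ nseq (size l - size [seq x <- l | 0 < x]) 0.
Proof.
elim: l => //= -[|a] l IH sorted_l /=; last by rewrite subSS -IH ?(path_sorted sorted_l).
have {IH} l_zeros : l = nseq (size l) 0.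
  by elim: l sorted_l {IH} => //= b l IH /andP[]; rewrite leqn0 => /eqP-> /IH {1}->.
by rewrite l_zeros filter_nseq /= size_nseq.
Qed.

Lemma sorted_geq_filter_pos_inj l1 l2 : sorted geq l1 -> sorted geq l2 ->
  size l1 = size l2 -> [seq x <- l1 | 0 < x] = [seq x <- l2 | 0 < x] -> l1 = l2.
Proof.
move=> /sorted_geq_split_zeros split1 /sorted_geq_split_zeros split2 size_eq filter_eq.
by rewrite split1 split2 filter_eq size_eq.
Qed.

Lemma sum_at_filter_pos P l : sorted geq l -> sum_at P [seq x <- l | 0 < x] = sum_at P l.
Proof. by move=> /sorted_geq_split_zeros {2}->; rewrite sum_at_cat_nseq0. Qed.

Definition column_factors (P : pred nat) (T : nat) : seq (nat * nat) :=
  [seq (count P (iota 0 t), t) | t <- iota 1 T].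

Definition column_partitions (P : pred nat) (T n k : nat) : seq (seq nat) :=
  [seq [seq x <- suffix_sums e | 0 < x] | e <- exponent_vectors (column_factors P T) n k].

Lemma mem_column_exponents P T n k e :
  (e \in exponent_vectors (column_factors P T) n k) =
  [&& size e == T, sumn (suffix_sums e) == n & sum_at P (suffix_sums e) == k].
Proof.
rewrite mem_exponent_vectors; last first.
  by apply/allP => cd /mapP[t]; rewrite mem_iota => /andP[t_gt0 _] ->.
rewrite size_map size_iota; case: eqP => //= <-.
by rewrite sumn_suffix_sums sum_at_suffix_sums /unzip1 /unzip2 -!map_comp map_id.
Qed.

Lemma size_column_partitions P T n k :
  size (column_partitions P T n k) = fps2_geom_prod (column_factors P T) n k.
Proof. by rewrite size_map size_exponent_vectors. Qed.

Lemma uniq_column_partitions P T n k : uniq (column_partitions P T n k).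
Proof.
rewrite map_inj_in_uniq ?uniq_exponent_vectors // => e1 e2.
rewrite !mem_column_exponents => /and3P[/eqP size1 _ _] /and3P[/eqP size2 _ _] eq_pos.
rewrite -(suffix_sumsK e1) -(suffix_sumsK e2); congr adjacent_diffs.
by apply: sorted_geq_filter_pos_inj; rewrite ?sorted_suffix_sums ?size_suffix_sums ?size1.
Qed.

Lemma mem_column_partitions P T n k l : n <= T ->
  (l \in column_partitions P T n k) = is_partition n l && (sum_at P l == k).
Proof.
move=> le_nT; apply/mapP/idP => [[e] | /andP[/and3P[sorted_l pos_l /eqP sum_l] /eqP sum_at_l]].
  rewrite mem_column_exponents => /and3P[_ /eqP sum_e /eqP sum_at_e] ->.
  have sorted_e := sorted_suffix_sums e.
  rewrite /is_partition sorted_filter ?filter_all //=; last exact: rev_trans leq_trans.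
  by rewrite -sum_at_true !sum_at_filter_pos // sum_at_true sum_e sum_at_e !eqxx.
have le_lT : size l <= T by rewrite (leq_trans (leq_size_sumn pos_l)) // sum_l.
have sorted_p := sorted_cat_nseq0 (T - size l) sorted_l.
exists (adjacent_diffs (l ++ nseq (T - size l) 0)); last first.
  by rewrite adjacent_diffsK // filter_cat filter_nseq /= cats0; apply/esym/all_filterP.
rewrite mem_column_exponents adjacent_diffsK // size_adjacent_diffs size_cat size_nseq.
by rewrite subnKC // -sum_at_true !sum_at_cat_nseq0 sum_at_true sum_l sum_at_l !eqxx.
Qed.

(* [Xmi m i] is convertible to [sum_at (Xmi_index m i)]. *)
Definition Xmi_index (m i : nat) : pred nat := fun j => j.+1 == i %[mod m].

Lemma eqn_mod_small m x y : 0 < x <= m -> 0 < y <= m -> (x == y %[mod m]) = (x == y).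
Proof.
case: x => // x /= le_xm; case: y => // y /= le_ym.
by rewrite -[x.+1]addn1 -[y.+1]addn1 eqn_modDr eqn_add2r !modn_small.
Qed.

Lemma count_Xmi_index_block m i a b : 0 < i <= m -> b <= m ->
  count (Xmi_index m i) (iota (a * m) b) = (i <= b).
Proof.
move=> i_range le_bm; rewrite -[a * m]addn0 iotaDl count_map.
rewrite (@eq_in_count _ _ (pred1 i.-1)) => [|j]; last first.
  rewrite mem_iota add0n => /andP[_ lt_jb] /=.
  rewrite /Xmi_index -addnS modnMDl eqn_mod_small ?(leq_trans lt_jb) //.
  by case: i i_range => // i _; rewrite eqSS.
rewrite count_uniq_mem ?iota_uniq // mem_iota add0n.
by case: i i_range.
Qed.

Lemma count_Xmi_index_iota m i a b : 0 < i <= m -> b <= m ->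
  count (Xmi_index m i) (iota 0 (a * m + b)) = a + (i <= b).
Proof.
move=> i_range; elim: a b => [|a IH] b le_bm.
  by rewrite -(mul0n m) count_Xmi_index_block.
rewrite mulSnr iotaD count_cat IH ?leqnn // add0n addnAC -mulSnr.
by rewrite count_Xmi_index_block // (andP i_range).2 addn1.
Qed.

Lemma flatten_factors_a m i N : 0 < i <= m ->
  flatten [seq factors_a m i a | a <- iota 0 N] = column_factors (Xmi_index m i) (N * m).
Proof.
move=> i_range; elim: N => [|N IH] //.
rewrite -addn1 iotaD map_cat flatten_cat IH /= cats0 mulnDl mul1n /column_factors iotaD.
rewrite map_cat add1n; congr (_ ++ _).
have split_m : iota (N * m).+1 m = iota (N * m).+1 (i - 1) ++ iota (N * m + i) (m - i + 1).
  rewrite (_ : N * m + i = (N * m).+1 + (i - 1)); last lia.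
  by rewrite -iotaD; congr iota; lia.
rewrite split_m /factors_a map_cat -[(N * m).+1]addn1 !iotaDl -!map_comp.
by congr (_ ++ _); apply/eq_in_map => b; rewrite mem_iota add0n => /andP[b_gt0 lt_b] /=;
  rewrite count_Xmi_index_iota //; try congr (_, _); lia.
Qed.

Theorem mainTheorem7 (m i : nat) (hm : 1 <= m) (hi1 : 1 <= i) (him : i <= m) :
  forall n k : nat,
    exists s : seq (seq nat),
      [/\ uniq s,
          (forall l, (l \in s) = is_partition n l && (Xmi m i l == k)) &
          exists N0, forall N, N0 <= N -> size s = partial_prod m i N n k].
Proof.
move=> n k; have i_range : 0 < i <= m by rewrite hi1 him.
have le_n_Nm N : n <= N -> n <= N * m by move=> le_nN; rewrite (leq_trans le_nN) ?leq_pmulr.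
exists (column_partitions (Xmi_index m i) n n k); split.
- exact: uniq_column_partitions.
- by move=> l; rewrite mem_column_partitions ?le_n_Nm.
exists n => N le_nN.
rewrite /partial_prod flatten_factors_a // -size_column_partitions.
apply/perm_size/uniq_perm; rewrite ?uniq_column_partitions // => l.
by rewrite !mem_column_partitions ?le_n_Nm.
Qed.
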